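(* Let $F$ and $H$ be two CNF formulae that do not share variables and are both unsatisfiable. Then the tree obtained from an optimal backtracking search tree of $F$ by replacing every empty subtree with an optimal backtracking search tree of $H$ is an optimal backtracking search tree of the product $F \cdot H = \{\gamma \vee \delta \mid \gamma \in F,\ \delta \in H\}$.
   Context: A CNF formula is a finite set of clauses (disjunctions of literals); the empty clause is unsatisfiable. For a partial truth assignment $I$ (a set of literals), $F|I$ is obtained from $F$ by deleting every clause containing a literal true under $I$ and deleting from the remaining clauses every literal false under $I$. $Var(F)$ is the set of variables of $F$. A binary tree is either the empty tree $()$ or a triple $(x~T_1~T_2)$ with root labelled $x$, left subtree $T_1$, right subtree $T_2$; its size is its number of nodes; the ''empty subtrees'' of a tree are all occurrences of $()$ inside it. A backtracking search tree (BST) of $F$ is: the empty tree if $F$ contains the empty clause; otherwise $(x~T_1~T_2)$ with $x \in Var(F)$, $T_1$ a BST of $F|\{\neg x\}$, $T_2$ a BST of $F|\{x\}$. An optimal BST is one of minimum size. *)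

From mathcomp Require Import all_boot.
Set Implicit Arguments. Unset Strict Implicit. Unset Printing Implicit Defensive.

(* Variables are natural numbers; a literal is (x, b):
   (x, true) is the positive literal x, (x, false) is ~x. *)
Definition lit := (nat * bool)%type.
Definition neg (l : lit) : lit := (l.1, ~~ l.2).

(* A clause is a finite set of literals, represented by a list (read as the
   set of its elements); a CNF formula is a finite set of clauses,
   represented by a list of clauses (read as the set of its elements). *)
Definition clause := seq lit.
Definition cnf := seq clause.

Definition vars (F : cnf) : seq nat := [seq l.1 | l <- flatten F].

Definition restrict (F : cnf) (I : seq lit) : cnf :=
  [seq [seq l <- C | neg l \notin I] | C <- [seq C <- F | ~~ has (fun l => l \in I) C]].

Definition lit_true (a : nat -> bool) (l : lit) : bool := a l.1 == l.2.
Definition satisfiable (F : cnf) : Prop :=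
  exists a : nat -> bool, all (fun C => has (lit_true a) C) F.

Inductive tree := Leaf | Node of nat & tree & tree.

Fixpoint tsize (T : tree) : nat :=
  match T with Leaf => 0 | Node _ T1 T2 => (tsize T1 + tsize T2).+1 end.

Fixpoint is_bst (F : cnf) (T : tree) : bool :=
  match T with
  | Leaf => [::] \in F
  | Node x T1 T2 =>
      [&& [::] \notin F, x \in vars F,
          is_bst (restrict F [:: neg (x, true)]) T1
        & is_bst (restrict F [:: (x, true)]) T2]
  end.

Definition optimal_bst (F : cnf) (T : tree) : Prop :=
  is_bst F T /\ forall T', is_bst F T' -> tsize T <= tsize T'.

Fixpoint graft (T S : tree) : tree :=
  match T with Leaf => S | Node x T1 T2 => Node x (graft T1 S) (graft T2 S) end.

Definition cnf_prod (F H : cnf) : cnf := [seq g ++ d | g <- F, d <- H].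

(* Restricting by a literal distributes over the product F . H, and a
   literal whose variable does not occur in a factor leaves that factor
   unchanged.  Hence grafting a search tree of H onto every leaf of a search
   tree of F gives a search tree of F . H, whose size s satisfies
   s + 1 = (|TF| + 1) (|TH| + 1).  Conversely, by induction on a search tree
   T of F . H whose root variable x lies (say) in F: its subtrees yield
   search trees A_i of F|x=b_i and B_i of H with
   (|A_i| + 1) (|B_i| + 1) <= |T_i| + 1; joining the A_i at x and keeping the
   smaller B_i gives search trees A of F and B of H with
   (|A| + 1) (|B| + 1) <= |T| + 1, which is the matching lower bound. *)

(* all_boot comes first so that [tsize] denotes the tree size of Defs and not
   the tuple size. *)
From mathcomp Require Import all_boot zify.
From Pilot Require Import Defs.
Set Implicit Arguments. Unset Strict Implicit.

Lemma mem_vars F x :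
  (x \in vars F) = has (fun C : clause => x \in [seq l.1 | l <- C]) F.
Proof. by elim: F => //= C F IH; rewrite /vars /= map_cat mem_cat -IH. Qed.

Lemma vars_cons C F x : (x \in vars (C :: F)) = (x \in [seq l.1 | l <- C]) || (x \in vars F).
Proof. by rewrite !mem_vars. Qed.

Lemma vars_restrict F I : {subset vars (restrict F I) <= vars F}.
Proof.
move=> x; rewrite !mem_vars /restrict has_map => /hasP [C].
rewrite mem_filter => /andP [_ CF] /mapP [l]; rewrite mem_filter => /andP [_ lC] ->.
by apply/hasP; exists C => //; apply: map_f.
Qed.

Lemma restrict_free F l : l.1 \notin vars F -> restrict F [:: l] = F.
Proof.
elim: F => //= C F IH; rewrite vars_cons negb_or => /andP [lC /IH {}IH].
have other l' : l' \in C -> l'.1 != l.1.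
  by move=> l'C; apply: contraNneq lC => <-; apply: map_f.
have lnC : ~~ has (fun l' => l' \in [:: l]) C.
  by apply/hasP => [[l' /other]]; rewrite inE => /[swap] /eqP ->; rewrite eqxx.
rewrite /restrict /= lnC; congr (_ :: _); last exact: IH.
apply/all_filterP/allP => l' /other.
by apply: contraNN; rewrite inE => /eqP <-.
Qed.

Lemma mem_nil_restrict F I : [::] \in F -> [::] \in restrict F I.
Proof. by move=> F0; apply/mapP; exists [::]; rewrite // mem_filter F0. Qed.

Lemma restrict_map_catl g H I :
  restrict [seq g ++ d | d <- H] I =
  if has (fun l => l \in I) g then [::]
  else [seq [seq l <- g | neg l \notin I] ++ d | d <- restrict H I].
Proof.
rewrite /restrict; case: ifP => gI; elim: H => //= d H IH; rewrite has_cat gI //=.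
by case: ifP => _ //=; rewrite IH filter_cat.
Qed.

Lemma restrict_cat F G I : restrict (F ++ G) I = restrict F I ++ restrict G I.
Proof. by rewrite /restrict filter_cat map_cat. Qed.

Lemma restrict_prod F H I :
  restrict (cnf_prod F H) I = cnf_prod (restrict F I) (restrict H I).
Proof.
elim: F => //= g F IH.
rewrite /cnf_prod allpairs_cons restrict_cat restrict_map_catl -/(cnf_prod _ _) IH.
by rewrite [restrict (g :: F) I]/restrict /=; case: ifP.
Qed.

Lemma mem_nil_prod F H : ([::] \in cnf_prod F H) = ([::] \in F) && ([::] \in H).
Proof.
apply/allpairsP/andP => [[[g d] /= [gF dH]] | [F0 H0]]; last by exists ([::], [::]).
by case: g gF => // gF; case: d dH.
Qed.

Lemma vars_prod F H x :
  x \in vars (cnf_prod F H) -> (x \in vars F) || (x \in vars H).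
Proof.
rewrite !mem_vars => /hasP [_ /allpairsP [[g d] /= [gF dH ->]]].
by rewrite map_cat mem_cat => /orP [xg | xd]; apply/orP; [left | right];
  apply/hasP; [exists g | exists d].
Qed.

Lemma vars_prodl F H x : H != [::] -> x \in vars F -> x \in vars (cnf_prod F H).
Proof.
case: H => // d H _; rewrite !mem_vars => /hasP [g gF xg].
apply/hasP; exists (g ++ d); first exact: allpairs_f (mem_head _ _).
by rewrite map_cat mem_cat xg.
Qed.

Lemma vars_prodr F H x : F != [::] -> x \in vars H -> x \in vars (cnf_prod F H).
Proof.
case: F => // g F _; rewrite !mem_vars => /hasP [d dH xd].
apply/hasP; exists (g ++ d); first exact: allpairs_f (mem_head _ _) dH.
by rewrite map_cat mem_cat xd orbT.
Qed.

Definition var_disjoint (F H : cnf) := forall x, x \in vars F -> x \notin vars H.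

Lemma var_disjoint_restrict F H I :
  var_disjoint F H -> var_disjoint (restrict F I) (restrict H I).
Proof. by move=> FH x /vars_restrict /FH; apply: contra; apply: vars_restrict. Qed.

Lemma tsize_graft T S : (tsize (graft T S)).+1 = (tsize T).+1 * (tsize S).+1.
Proof. elim: T => [|x T1 IH1 T2 IH2] /=; [by rewrite mul1n | nia]. Qed.

Lemma bst_neq_nil F T : is_bst F T -> F != [::].
Proof. by case: T => [|x T1 T2] /=; [case: F | case/and4P => _; case: F]. Qed.

Lemma bst_prod_nill F H T : [::] \in F -> is_bst H T -> is_bst (cnf_prod F H) T.
Proof.
elim: T F H => [|x T1 IH1 T2 IH2] F H F0 /=; first by rewrite mem_nil_prod F0.
case/and4P=> H0 xH b1 b2; rewrite mem_nil_prod (negbTE H0) andbF vars_prodr //=.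
  by rewrite !restrict_prod IH1 ?IH2 // mem_nil_restrict.
by apply: contraTneq F0 => ->.
Qed.

Lemma bst_graft F H TF TH : var_disjoint F H ->
  is_bst F TF -> is_bst H TH -> is_bst (cnf_prod F H) (graft TF TH).
Proof.
elim: TF F => [|x T1 IH1 T2 IH2] F FH /=; first exact: bst_prod_nill.
case/and4P=> F0 xF b1 b2 bH; have xH := FH x xF.
rewrite mem_nil_prod (negbTE F0) vars_prodl ?(bst_neq_nil bH) //=.
have FlH l : l.1 = x -> var_disjoint (restrict F [:: l]) H.
  by move=> lx; rewrite -[H](restrict_free (l := l)) ?lx //; apply: var_disjoint_restrict.
by rewrite !restrict_prod !(@restrict_free H) // IH1 ?IH2 //; apply: FlH.
Qed.

Definition bst_pair_bound (F H : cnf) (n : nat) :=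
  exists A B, [/\ is_bst F A, is_bst H B & (tsize A).+1 * (tsize B).+1 <= n.+1].

Lemma bst_pair_bound_sym F H n : bst_pair_bound F H n -> bst_pair_bound H F n.
Proof. by case=> A [B [bA bB AB]]; exists B, A; rewrite mulnC. Qed.

Lemma bst_split_var F x A1 A2 : x \in vars F ->
  is_bst (restrict F [:: neg (x, true)]) A1 -> is_bst (restrict F [:: (x, true)]) A2 ->
  exists2 A, is_bst F A & tsize A <= (tsize A1 + tsize A2).+1.
Proof.
case F0: ([::] \in F) => xF b1 b2; first by exists Leaf.
by exists (Node x A1 A2); rewrite //= F0 xF b1 b2.
Qed.

Lemma leq_mul_minn a a1 a2 b1 b2 t1 t2 : a <= (a1 + a2).+1 ->
  a1.+1 * b1.+1 <= t1.+1 -> a2.+1 * b2.+1 <= t2.+1 ->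
  a.+1 * (minn b1 b2).+1 <= (t1 + t2).+2.
Proof.
move=> aa ab1 ab2; have m1 := geq_minl b1 b2; have m2 := geq_minr b1 b2; nia.
Qed.

Lemma bst_pair_bound_node F H x t1 t2 : x \in vars F -> x \notin vars H ->
  bst_pair_bound (restrict F [:: neg (x, true)]) H t1 ->
  bst_pair_bound (restrict F [:: (x, true)]) H t2 ->
  bst_pair_bound F H (t1 + t2).+1.
Proof.
move=> xF xH [A1 [B1 [bA1 bB1 s1]]] [A2 [B2 [bA2 bB2 s2]]].
have [A bA sA] := bst_split_var xF bA1 bA2.
have [B bB sB] : exists2 B, is_bst H B & tsize B = minn (tsize B1) (tsize B2).
  by case: (leqP (tsize B1) (tsize B2)) => le12; [exists B1 | exists B2];
    rewrite // (minn_idPl _) // ltnW.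
by exists A, B; split; rewrite // sB; apply: leq_mul_minn sA s1 s2.
Qed.

Lemma bst_prod_lower F H T : var_disjoint F H ->
  is_bst (cnf_prod F H) T -> bst_pair_bound F H (tsize T).
Proof.
elim: T F H => [|x T1 IH1 T2 IH2] F H FH /=.
  by rewrite mem_nil_prod => /andP [F0 H0]; exists Leaf, Leaf.
case/and4P=> _ /vars_prod xFH; rewrite !restrict_prod.
move=> /(IH1 _ _ (var_disjoint_restrict FH)) b1 /(IH2 _ _ (var_disjoint_restrict FH)) b2.
case/orP: xFH => [xF | xH].
  have xH := FH x xF; rewrite !(@restrict_free H) // in b1 b2.
  exact: (bst_pair_bound_node xF xH b1 b2).
have xF : x \notin vars F by apply: contraL xH; apply: FH.
rewrite !(@restrict_free F) // in b1 b2.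
apply/bst_pair_bound_sym/(bst_pair_bound_node xH xF); exact: bst_pair_bound_sym.
Qed.

Theorem lemma5 (F H : cnf) (TF TH : tree) :
  (forall x, x \in vars F -> x \notin vars H) ->
  ~ satisfiable F -> ~ satisfiable H ->
  optimal_bst F TF -> optimal_bst H TH ->
  optimal_bst (cnf_prod F H) (graft TF TH).
Proof.
(* Unsatisfiability is implied by the existence of search trees. *)
move=> FH _ _ [bF optF] [bH optH]; split; first exact: bst_graft.
move=> T bT; have [A [B [bA bB AB]]] := bst_prod_lower FH bT.
rewrite -ltnS tsize_graft; apply: leq_trans AB.
by apply: leq_mul; rewrite ltnS; [apply: optF | apply: optH].
Qed.
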